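(* Let $(X,U)$ be a minimizer of Problem 1 and let $(K,H,G,F)$ be the unique solution of $\begin{bmatrix} K & H \\ G & F \end{bmatrix}\begin{bmatrix} X \\ Z \end{bmatrix} = \begin{bmatrix} U \\ V \end{bmatrix}$. Fix $x_0\in\{\mathrm{e}_1,\dots,\mathrm{e}_n\}$ and let $u_{\mathcal{K}}^*=\big(u(0)^\top,\dots,u(N-1)^\top\big)^\top\in\mathbb{R}^{mN}$ be the input sequence generated by the closed loop of the plant $x(t+1)=Ax(t)+Bu(t)$, $x(0)=x_0$, with the compensator $z(t+1)=Fz(t)+Gx(t)$, $u(t)=Hz(t)+Kx(t)$, $z(0)=0$. Then $u_{\mathcal{K}}^*$ is an optimal solution $u^*$ of the open-loop $\ell_1$ optimal control problem $$\min_{u\in\mathbb{R}^{mN}}\ \sum_{t=0}^{N-1}\|u(t)\|_1\quad\text{s.t.}\quad \Phi_N u=-A^Nx_0,\quad -s\le Cx(t)+Du(t)\le s\ \ (t=0,\dots,N-1),$$ where $x(t)$ is the state generated by $u$ from $x_0$; i.e. $u^*=u_{\mathcal{K}}^*=Hz+Kx^*$.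
   Context: Plant: $x(t+1)=Ax(t)+Bu(t)$, $y(t)=Cx(t)+Du(t)$, with $x(t)\in\mathbb{R}^n$, $u(t)\in\mathbb{R}^m$ ($m\le n$), $y(t)\in\mathbb{R}^p$, $(A,B)$ reachable. $N\ge 2$ is a horizon such that the feasible sets are nonempty. $\Phi_N=[A^{N-1}B~\cdots~AB~B]\in\mathbb{R}^{n\times mN}$, assumed of full row rank $n$; the constraint $\Phi_Nu=-A^Nx_0$ is equivalent to $x(N)=0$. $\mathrm{e}_j$ denotes a standard basis vector. $P\in\mathbb{R}^{N\times N}$ is the nilpotent shift matrix $P=\begin{bmatrix}0 & 0\\ I_{N-1} & 0\end{bmatrix}$; $\otimes$ is the Kronecker product; $\|W\|_1=\sum_{i,j}|w_{ij}|$; $\mathrm{abs}(W)$ is entrywise absolute value; $\mathbf{1}_k$ is the all-ones vector of length $k$. Given $s\in\mathbb{R}^p$, Problem 1 is: minimize $\|U\|_1$ over $X\in\mathbb{R}^{n\times nN}$, $U\in\mathbb{R}^{m\times nN}$ subject to $AX+BU=X(P\otimes I_n)$, $X(\mathrm{e}_1\otimes I_n)=I_n$ ($\mathrm{e}_1\in\mathbb{R}^N$), and $\mathrm{abs}(CX+DU)\le s(\mathbf{1}_n\otimes\mathbf{1}_N)^\top$ entrywise. $Z=\begin{bmatrix}0_{n(N-1)\times n} & I_{n(N-1)}\end{bmatrix}$, $V=Z(P\otimes I_n)$. *)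

From mathcomp Require Import all_boot all_order all_algebra.
Set Implicit Arguments. Unset Strict Implicit. Unset Printing Implicit Defensive.
Import Order.TTheory GRing.Theory Num.Theory.
Local Open Scope ring_scope.

Section Defs.
Variable R : realFieldType.

Definition kron p q r s (A : 'M[R]_(p, q)) (B : 'M[R]_(r, s)) : 'M[R]_(p * r, q * s) :=
  \matrix_(i, j) \sum_(a < p) \sum_(b < r) \sum_(c < q) \sum_(d < s)
     (if ((i : nat) == a * r + b)%N && ((j : nat) == c * s + d)%N
      then A a c * B b d else 0).

(* nilpotent shift matrix P = [0 0; I_{N-1} 0] *)
Definition shiftP N : 'M[R]_N := \matrix_(i, j) ((i : nat) == j.+1)%:R.

Definition e1 N : 'cV[R]_N := \col_i ((i : nat) == 0)%:R.

(* Z = [0_{n(N-1) x n}  I_{n(N-1)}] *)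
Definition Zmat n N : 'M[R]_(n * (N - 1), N * n) :=
  \matrix_(i, j) ((j : nat) == n + i)%:R.

Definition Vmat n N : 'M[R]_(n * (N - 1), N * n) :=
  Zmat n N *m kron (shiftP N) (1%:M : 'M[R]_n).

Definition norm1 p q (W : 'M[R]_(p, q)) : R := \sum_i \sum_j `|W i j|.

Definition prob1_feasible n m p N (A : 'M[R]_n) (B : 'M[R]_(n, m))
    (C : 'M[R]_(p, n)) (D : 'M[R]_(p, m)) (s : 'cV[R]_p)
    (X : 'M[R]_(n, N * n)) (U : 'M[R]_(m, N * n)) : Prop :=
  [/\ A *m X + B *m U = X *m kron (shiftP N) (1%:M : 'M[R]_n),
      X *m castmx (erefl (N * n)%N, mul1n n) (kron (e1 N) (1%:M : 'M[R]_n)) = 1%:M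
    & forall i j, `|(C *m X + D *m U) i j| <= s i 0].

Definition prob1_minimizer n m p N (A : 'M[R]_n) (B : 'M[R]_(n, m))
    (C : 'M[R]_(p, n)) (D : 'M[R]_(p, m)) (s : 'cV[R]_p)
    (X : 'M[R]_(n, N * n)) (U : 'M[R]_(m, N * n)) : Prop :=
  prob1_feasible A B C D s X U /\
  forall X' U', prob1_feasible (N := N) A B C D s X' U' -> norm1 U <= norm1 U'.

(* Phi_N = [A^{N-1}B ... AB B] *)
Definition PhiN n m N (A : 'M[R]_n) (B : 'M[R]_(n, m)) : 'M[R]_(n, N * m) :=
  \matrix_(i, j) \sum_(t < N) \sum_(k < m)
     (if (j : nat) == (t * m + k)%N then (A ^+ (N.-1 - t)%N *m B) i k else 0).

(* the t-th block u(t) of a stacked vector u in R^{mN} (0 if t >= N) *)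
Definition blk m N (u : 'cV[R]_(N * m)) (t : nat) : 'cV[R]_m :=
  \col_k (match @insub _ (fun j => j < N * m)%N 'I_(N * m) (t * m + k)%N with
          | Some j => u j 0 | None => 0 end).

Definition stack m N (f : nat -> 'cV[R]_m) : 'cV[R]_(N * m) :=
  \col_j \sum_(t < N) \sum_(k < m) (if (j : nat) == (t * m + k)%N then f t k 0 else 0).

Fixpoint olstate n m N (A : 'M[R]_n) (B : 'M[R]_(n, m)) (x0 : 'cV[R]_n)
    (u : 'cV[R]_(N * m)) (t : nat) : 'cV[R]_n :=
  match t with
  | 0 => x0
  | t'.+1 => A *m olstate A B x0 u t' + B *m blk u t'
  end.

Definition ol_feasible n m p N (A : 'M[R]_n) (B : 'M[R]_(n, m))
    (C : 'M[R]_(p, n)) (D : 'M[R]_(p, m)) (s : 'cV[R]_p) (x0 : 'cV[R]_n)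
    (u : 'cV[R]_(N * m)) : Prop :=
  PhiN N A B *m u = - (A ^+ N *m x0) /\
  forall t, (t < N)%N -> forall i,
    - s i 0 <= (C *m olstate A B x0 u t + D *m blk u t) i 0 <= s i 0.

Definition ol_cost m N (u : 'cV[R]_(N * m)) : R :=
  \sum_(t < N) \sum_(k < m) `|blk u t k 0|.

Definition ol_optimal n m p N (A : 'M[R]_n) (B : 'M[R]_(n, m))
    (C : 'M[R]_(p, n)) (D : 'M[R]_(p, m)) (s : 'cV[R]_p) (x0 : 'cV[R]_n) (u : 'cV[R]_(N * m)) : Prop :=
  @ol_feasible n m p N A B C D s x0 u /\
  forall u', @ol_feasible n m p N A B C D s x0 u' -> ol_cost u <= ol_cost u'.

Fixpoint clstate n m q (A : 'M[R]_n) (B : 'M[R]_(n, m))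
    (K : 'M[R]_(m, n)) (H : 'M[R]_(m, q)) (G : 'M[R]_(q, n)) (F : 'M[R]_q)
    (x0 : 'cV[R]_n) (t : nat) : 'cV[R]_n * 'cV[R]_q :=
  match t with
  | 0 => (x0, 0)
  | t'.+1 =>
      let: (x, z) := clstate A B K H G F x0 t' in
      (A *m x + B *m (H *m z + K *m x), F *m z + G *m x)
  end.

Definition clinput n m q (A : 'M[R]_n) (B : 'M[R]_(n, m))
    (K : 'M[R]_(m, n)) (H : 'M[R]_(m, q)) (G : 'M[R]_(q, n)) (F : 'M[R]_q) (x0 : 'cV[R]_n) (t : nat) : 'cV[R]_m :=
  let: (x, z) := @clstate n m q A B K H G F x0 t in H *m z + K *m x.

End Defs.

From mathcomp Require Import all_boot all_order all_algebra zify.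
Set Implicit Arguments. Unset Strict Implicit. Unset Printing Implicit Defensive.
Import Order.TTheory GRing.Theory Num.Theory.
Local Open Scope ring_scope.

(* Read column by column, Problem 1 decouples: for each k, the columns t * n + k
   (t < N) of X and U are a state/input trajectory of the plant from x(0) = e_k that
   reaches 0 at time N within the output bounds, and ||U||_1 is the sum of the l1
   costs of these n trajectories.  So the i-th family of a minimizer is an optimal
   open-loop solution from e_i: exchanging it for any feasible open-loop trajectory
   keeps (X, U) feasible for Problem 1.  The equations K X + H Z = U and
   G X + F Z = Z (P (x) I) say that the closed loop started at (e_i, 0) replays
   exactly this family, the compensator state z(t) being the i-th block column of Z. *)


Section BlockIndex.
Variables N n : nat.

Lemma eqn_divmod t t' k k' : (k < n)%N -> (k' < n)%N ->
  ((t * n + k)%N == (t' * n + k')%N) = (t == t') && (k == k').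
Proof.
move=> lt_k lt_k'; apply/eqP/andP => [E|[/eqP -> /eqP ->]] //.
have n_gt0 : (0 < n)%N by case: n lt_k {lt_k' E}.
have Et : t = t'.
  by have := congr1 (divn ^~ n) E; rewrite /= !divnMDl // !divn_small // !addn0.
by split; apply/eqP; move: E; rewrite Et // => /addnI.
Qed.

Lemma blkidx_subproof (t : 'I_N) (k : 'I_n) : (t * n + k < N * n)%N.
Proof. by move: (ltn_ord t) (ltn_ord k); nia. Qed.

Definition blkidx t k : 'I_(N * n) := Ordinal (blkidx_subproof t k).

Lemma blkidx_time_subproof (j : 'I_(N * n)) : (j %/ n < N)%N.
Proof. by case: n j => [|n'] j; [case: j; rewrite muln0 | rewrite ltn_divLR]. Qed.

Lemma blkidx_off_subproof (j : 'I_(N * n)) : (j %% n < n)%N.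
Proof. by case: n j => [|n'] j; [case: j; rewrite muln0 | rewrite ltn_pmod]. Qed.

Definition blkidx_time j : 'I_N := Ordinal (blkidx_time_subproof j).
Definition blkidx_off j : 'I_n := Ordinal (blkidx_off_subproof j).

Lemma blkidx_timeK t k : blkidx_time (blkidx t k) = t.
Proof.
apply: val_inj => /=; have n_gt0 : (0 < n)%N by case: n k => [[]|].
by rewrite divnMDl // divn_small // addn0.
Qed.

Lemma blkidx_offK t k : blkidx_off (blkidx t k) = k.
Proof. by apply: val_inj; rewrite /= modnMDl modn_small. Qed.

Lemma blkidxK j : blkidx (blkidx_time j) (blkidx_off j) = j.
Proof. by apply: val_inj; rewrite /= -divn_eq. Qed.

Lemma big_blkidx (V : nmodType) (F : 'I_(N * n) -> V) :
  \sum_j F j = \sum_(t < N) \sum_(k < n) F (blkidx t k).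
Proof.
rewrite pair_big (reindex (fun p : 'I_N * 'I_n => blkidx p.1 p.2)) //=.
by exists (fun j => (blkidx_time j, blkidx_off j)) => [[t k] _|j _];
  rewrite /= ?blkidx_timeK ?blkidx_offK ?blkidxK.
Qed.

Lemma sum_blkidx_pick (V : nmodType) (t : 'I_N) (k : 'I_n) (F : 'I_N -> 'I_n -> V) :
  \sum_(t' < N) \sum_(k' < n) (if (t * n + k == t' * n + k')%N then F t' k' else 0) = F t k.
Proof.
under eq_bigr => t' _ do under eq_bigr => k' _ do rewrite eqn_divmod // !val_eqE.
rewrite (big_only1 t) // => [|t' ne _]; last first.
  by apply: big1 => ? _; rewrite eq_sym in ne; rewrite (negbTE ne).
rewrite (big_only1 k) // => [|k' ne _]; first by rewrite !eqxx.
by rewrite eq_sym in ne; rewrite (negbTE ne) andbF.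
Qed.

End BlockIndex.

Section ColumnBlocks.
Variables (R : pzRingType) (N n : nat).

Definition blkvec (t : nat) (k : 'I_n) : 'cV[R]_(N * n) :=
  if insub (t * n + k)%N is Some j then delta_mx j 0 else 0.

Definition colblk r (M : 'M[R]_(r, N * n)) t k : 'cV[R]_r := M *m blkvec t k.

Lemma blkvecE t k (t' : 'I_N) k' :
  blkvec t k (blkidx t' k') 0 = ((t' == t :> nat) && (k' == k))%:R.
Proof.
rewrite /blkvec; case: insubP => [j _ Ej|out].
  by rewrite mxE eqxx andbT -val_eqE Ej eqn_divmod.
rewrite mxE; case: eqP => //= Et.
by move: out; rewrite -Et blkidx_subproof.
Qed.

Lemma blkvec_out t k : (N <= t)%N -> blkvec t k = 0.
Proof.
by move=> le_Nt; rewrite /blkvec insubF //; apply/negbTE; rewrite -leqNgt; nia.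
Qed.

Lemma blkvec_blkidx (t : 'I_N) k : blkvec t k = delta_mx (blkidx t k) 0.
Proof. by rewrite /blkvec (valK (blkidx t k)). Qed.

Lemma colblk_blkidx r (M : 'M[R]_(r, N * n)) (t : 'I_N) k :
  colblk M t k = col (blkidx t k) M.
Proof. by rewrite colE /colblk blkvec_blkidx. Qed.

Lemma colblk_out r (M : 'M[R]_(r, N * n)) t k : (N <= t)%N -> colblk M t k = 0.
Proof. by move=> le_Nt; rewrite /colblk blkvec_out ?mulmx0. Qed.

Lemma colblk_mul r l (M : 'M[R]_(r, l)) (W : 'M[R]_(l, N * n)) t k :
  colblk (M *m W) t k = M *m colblk W t k.
Proof. exact: esym (mulmxA _ _ _). Qed.

Lemma colblk_add r (M W : 'M[R]_(r, N * n)) t k :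
  colblk (M + W) t k = colblk M t k + colblk W t k.
Proof. exact: mulmxDl. Qed.

Lemma colblk_inj r (M W : 'M[R]_(r, N * n)) :
  (forall (t : 'I_N) k, colblk M t k = colblk W t k) -> M = W.
Proof.
move=> eqMW; apply/matrixP => a j; rewrite -(blkidxK j).
by have := congr1 (fun v : 'cV[R]_r => v a 0) (eqMW (blkidx_time j) (blkidx_off j));
  rewrite !colblk_blkidx !mxE.
Qed.

Definition blkmx r (g : 'I_n -> nat -> 'cV[R]_r) : 'M[R]_(r, N * n) :=
  \matrix_(a, j) g (blkidx_off j) (blkidx_time j) a 0.

Lemma colblk_blkmx r (g : 'I_n -> nat -> 'cV[R]_r) t k :
  colblk (blkmx g) t k = if (t < N)%N then g k t else 0.
Proof.
have [lt_tN | le_Nt] := ltnP t N; last exact: colblk_out.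
apply/colP => a; rewrite (colblk_blkidx _ (Ordinal lt_tN)) !mxE.
by rewrite blkidx_offK blkidx_timeK.
Qed.

End ColumnBlocks.

Section BlockCost.
Variables (R : realFieldType) (N n : nat).

Definition famcost r (W : 'M[R]_(r, N * n)) k : R :=
  \sum_(t < N) \sum_a `|colblk W t k a 0|.

Lemma norm1_famcost r (W : 'M[R]_(r, N * n)) : norm1 W = \sum_k famcost W k.
Proof.
rewrite /norm1 /famcost; under eq_bigr do rewrite big_blkidx.
under [RHS]eq_bigr => k _ do under eq_bigr => t _ do
  under eq_bigr => a _ do rewrite colblk_blkidx mxE.
rewrite exchange_big; under eq_bigr do rewrite exchange_big.
by rewrite exchange_big.
Qed.

Lemma famcost_blkmx r (g : 'I_n -> nat -> 'cV[R]_r) k :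
  famcost (blkmx N g) k = \sum_(t < N) \sum_a `|g k t a 0|.
Proof. by apply: eq_bigr => t _; rewrite colblk_blkmx ltn_ord. Qed.

End BlockCost.

Lemma kronE (R : realFieldType) p q r s (A : 'M[R]_(p, q)) (B : 'M[R]_(r, s)) a b c d :
  kron A B (blkidx a b) (blkidx c d) = A a c * B b d.
Proof.
rewrite mxE.
under eq_bigr => a' _ do under eq_bigr => b' _ do under eq_bigr => c' _ do
  under eq_bigr => d' _ do rewrite !eqn_divmod // !val_eqE.
rewrite (big_only1 a) // => [|a' ne _]; last first.
  by do 3!(apply: big1 => ? _); rewrite eq_sym in ne; rewrite (negbTE ne).
rewrite (big_only1 b) // => [|b' ne _]; last first.
  by do 2!(apply: big1 => ? _); rewrite eq_sym in ne; rewrite (negbTE ne) andbF.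
rewrite (big_only1 c) // => [|c' ne _]; last first.
  by apply: big1 => ? _; rewrite eq_sym in ne; rewrite (negbTE ne) andbF.
rewrite (big_only1 d) // => [|d' ne _]; first by rewrite !eqxx.
by rewrite eq_sym in ne; rewrite (negbTE ne) !andbF.
Qed.

Section StructuredMatrices.
Variables (R : realFieldType) (N n : nat).

Lemma kron_shiftP_blkvec t k :
  kron (shiftP R N) (1%:M : 'M[R]_n) *m blkvec R N t k = blkvec R N t.+1 k.
Proof.
have [lt_tN | le_Nt] := ltnP t N; last by rewrite !blkvec_out ?mulmx0 ?(leqW le_Nt).
apply/colP => j; rewrite -(blkidxK j) (blkvec_blkidx _ (Ordinal lt_tN)) -colE mxE.
by rewrite kronE blkvecE !mxE -natrM mulnb.
Qed.

Lemma colblk_mul_shiftP r (M : 'M[R]_(r, N * n)) t k :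
  colblk (M *m kron (shiftP R N) 1%:M) t k = colblk M t.+1 k.
Proof. by rewrite /colblk -mulmxA kron_shiftP_blkvec. Qed.

Lemma col_kron_e1 k :
  col k (castmx (erefl (N * n)%N, mul1n n) (kron (e1 R N) (1%:M : 'M[R]_n))) =
  blkvec R N 0 k.
Proof.
apply/colP => j; rewrite -(blkidxK j) mxE castmxE blkvecE.
have -> : cast_ord (esym (mul1n n)) k = blkidx (ord0 : 'I_1) k by apply: val_inj.
by rewrite cast_ord_id kronE !mxE -natrM mulnb.
Qed.

Lemma colblk0_Zmat k : colblk (Zmat R n N) 0 k = 0.
Proof.
rewrite /colblk /blkvec; case: insubP => [j _ Ej|_]; last by rewrite mulmx0.
apply/colP => a; rewrite -colE !mxE Ej mul0n add0n; case: eqP => // Ek.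
by move: (ltn_ord k); rewrite Ek ltnNge leq_addr.
Qed.

End StructuredMatrices.

Section OpenLoop.
Variables (R : realFieldType) (n m N : nat) (A : 'M[R]_n) (B : 'M[R]_(n, m)).

Lemma blkE (u : 'cV[R]_(N * m)) (t : 'I_N) k : blk u t k 0 = u (blkidx t k) 0.
Proof. by rewrite mxE (valK (blkidx t k)). Qed.

Lemma blk_stack (f : nat -> 'cV[R]_m) t : (t < N)%N -> blk (stack N f) t = f t.
Proof.
move=> lt_tN; apply/colP => k; rewrite (blkE _ (Ordinal lt_tN)) mxE /=.
exact: (sum_blkidx_pick (Ordinal lt_tN) k (fun t' k' => f t' k' 0)).
Qed.

Lemma PhiN_mul (u : 'cV[R]_(N * m)) :
  PhiN N A B *m u = \sum_(t < N) (A ^+ (N.-1 - t) *m B) *m blk u t.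
Proof.
apply/colP => i; rewrite mxE summxE big_blkidx; apply: eq_bigr => t _.
rewrite mxE; apply: eq_bigr => k _; rewrite mxE blkE; congr (_ * _).
exact: (sum_blkidx_pick t k (fun t' k' => (A ^+ (N.-1 - t') *m B) i k')).
Qed.

Lemma olstate_sum x0 (u : 'cV[R]_(N * m)) t :
  olstate A B x0 u t = A ^+ t *m x0 + \sum_(s < t) (A ^+ (t.-1 - s) *m B) *m blk u s.
Proof.
elim: t => [|t IH] /=; first by rewrite expr0 mul1mx big_ord0 addr0.
rewrite IH big_ord_recr /= subnn expr0 mul1mx mulmxDr mulmxA addrA; congr (_ + _).
rewrite mulmx_sumr mulmxE -exprS; congr (_ + _); apply: eq_bigr => s _.
rewrite !mulmxA; congr (_ *m _ *m _).
have -> : (t - s = (t.-1 - s).+1)%N by move: (ltn_ord s); lia.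
by rewrite exprS mulmxE.
Qed.

Lemma olstate_N x0 (u : 'cV[R]_(N * m)) :
  olstate A B x0 u N = A ^+ N *m x0 + PhiN N A B *m u.
Proof. by rewrite olstate_sum PhiN_mul. Qed.

End OpenLoop.

Section Trajectories.
Variables (R : realFieldType) (n m p N : nat).
Variables (A : 'M[R]_n) (B : 'M[R]_(n, m)) (C : 'M[R]_(p, n)) (D : 'M[R]_(p, m)).
Variable s : 'cV[R]_p.

Definition traj_feasible (x0 : 'cV[R]_n) (x : nat -> 'cV[R]_n) (u : nat -> 'cV[R]_m) :=
  [/\ x 0%N = x0, forall t, (t < N)%N -> x t.+1 = A *m x t + B *m u t, x N = 0
    & forall t, (t < N)%N -> forall a, `|(C *m x t + D *m u t) a 0| <= s a 0].

Lemma eq_traj_feasible x0 x x' u u' :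
  (forall t, (t <= N)%N -> x t = x' t) -> (forall t, (t < N)%N -> u t = u' t) ->
  traj_feasible x0 x u -> traj_feasible x0 x' u'.
Proof.
move=> eq_x eq_u [x_0 x_S x_N x_s]; split=> [|t lt_tN||t lt_tN].
- by rewrite -eq_x.
- by rewrite -!eq_x ?(ltnW lt_tN) // -eq_u // x_S.
- by rewrite -eq_x.
- by move=> a; rewrite -eq_x ?(ltnW lt_tN) // -eq_u // x_s.
Qed.

Lemma ol_feasibleP x0 (u : 'cV[R]_(N * m)) :
  ol_feasible A B C D s x0 u <-> traj_feasible x0 (olstate A B x0 u) (blk u).
Proof.
rewrite /ol_feasible /traj_feasible olstate_N.
have eq_bound t : (forall a, - s a 0 <= (C *m olstate A B x0 u t + D *m blk u t) a 0 <= s a 0)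
  <-> (forall a, `|(C *m olstate A B x0 u t + D *m blk u t) a 0| <= s a 0).
  by split=> bnd a; [rewrite ler_norml | rewrite -ler_norml]; apply: bnd.
split=> [[PhiN_u bnd]|[_ _ /eqP xN bnd]]; split=> // [|t lt_tN].
- by rewrite PhiN_u subrr.
- exact/eq_bound/bnd.
- by apply/eqP; rewrite -addr_eq0 addrC.
- exact/eq_bound/bnd.
Qed.

Lemma traj_feasible_trunc x0 x u : traj_feasible x0 x u ->
  traj_feasible x0 (fun t => if (t < N)%N then x t else 0)
                   (fun t => if (t < N)%N then u t else 0).
Proof.
move=> feas; apply: eq_traj_feasible (feas) => [t|t ->] //.
by rewrite leq_eqVlt => /predU1P[->|->] //; rewrite ltnn; case: feas.
Qed.

Lemma shift_eq_colblkP (X : 'M[R]_(n, N * n)) U :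
  A *m X + B *m U = X *m kron (shiftP R N) 1%:M <->
  forall t, (t < N)%N -> forall k, colblk X t.+1 k = A *m colblk X t k + B *m colblk U t k.
Proof.
split=> [eqXU t _ k | dyn].
  by rewrite -colblk_mul_shiftP -eqXU colblk_add !colblk_mul.
by apply: colblk_inj => t k; rewrite colblk_mul_shiftP colblk_add !colblk_mul dyn.
Qed.

Lemma init_colblkP (X : 'M[R]_(n, N * n)) :
  X *m castmx (erefl (N * n)%N, mul1n n) (kron (e1 R N) 1%:M) = 1%:M <->
  forall k, colblk X 0 k = delta_mx k 0.
Proof.
have col_XW k : col k (X *m castmx (erefl (N * n)%N, mul1n n) (kron (e1 R N) 1%:M))
    = colblk X 0 k by rewrite colE -mulmxA -colE col_kron_e1.
split=> [eqX1 k | init]; first by rewrite -col_XW eqX1 col1.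
apply/matrixP => a k; have /colP/(_ a) := init k.
by rewrite -col_XW -col1 !mxE.
Qed.

Lemma bound_colblkP (X : 'M[R]_(n, N * n)) (U : 'M[R]_(m, N * n)) :
  (forall a j, `|(C *m X + D *m U) a j| <= s a 0) <->
  forall t, (t < N)%N -> forall k a, `|(C *m colblk X t k + D *m colblk U t k) a 0| <= s a 0.
Proof.
have colblk_CD (t : 'I_N) k a :
    (C *m colblk X t k + D *m colblk U t k) a 0 = (C *m X + D *m U) a (blkidx t k).
  by rewrite -!colblk_mul -colblk_add colblk_blkidx mxE.
split=> [bnd t lt_tN k a | bnd a j].
  by rewrite (colblk_CD (Ordinal lt_tN)).
by rewrite -(blkidxK j) -colblk_CD bnd.
Qed.

Lemma prob1_feasibleP (X : 'M[R]_(n, N * n)) (U : 'M[R]_(m, N * n)) :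
  prob1_feasible A B C D s X U <->
  forall k, traj_feasible (delta_mx k 0) (fun t => colblk X t k) (fun t => colblk U t k).
Proof.
split=> [[/shift_eq_colblkP dyn /init_colblkP init /bound_colblkP bnd] k | fam].
  by split=> [|t lt_tN||t lt_tN]; [exact: init | exact: dyn | exact: colblk_out | exact: bnd].
split; [apply/shift_eq_colblkP | apply/init_colblkP | apply/bound_colblkP].
- by move=> t lt_tN k; case: (fam k) => _ -> .
- by move=> k; case: (fam k).
- by move=> t lt_tN k; case: (fam k) => _ _ _; apply.
Qed.

Lemma traj_feasible_ol x0 x (u : 'cV[R]_(N * m)) :
  traj_feasible x0 x (blk u) -> ol_feasible A B C D s x0 u.
Proof.
move=> feas; apply/ol_feasibleP; apply: eq_traj_feasible (feas) => // t.
case: feas => x_0 x_S _ _; elim: t => [|t IH] lt_tN //=.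
by rewrite x_S // IH // ltnW.
Qed.

Lemma minimizer_family_optimal (X : 'M[R]_(n, N * n)) (U : 'M[R]_(m, N * n)) i
    (u : 'cV[R]_(N * m)) :
  prob1_minimizer A B C D s X U -> (forall t, (t < N)%N -> blk u t = colblk U t i) ->
  ol_optimal A B C D s (delta_mx i 0) u.
Proof.
move=> [feasXU minXU] eq_u; have fam := (prob1_feasibleP X U).1 feasXU.
split=> [|u' /ol_feasibleP feas'].
  by apply: traj_feasible_ol; apply: eq_traj_feasible (fam i) => // t /eq_u.
pose X' := blkmx N (fun k => if k == i then olstate A B (delta_mx i 0) u' else colblk X ^~ k).
pose U' := blkmx N (fun k => if k == i then blk u' else colblk U ^~ k).
have feasXU' : prob1_feasible A B C D s X' U'.
  apply/prob1_feasibleP => k.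
  have fam'_k : traj_feasible (delta_mx k 0)
      (if k == i then olstate A B (delta_mx i 0) u' else colblk X ^~ k)
      (if k == i then blk u' else colblk U ^~ k) by case: eqP => [->|].
  by apply: eq_traj_feasible (traj_feasible_trunc fam'_k) => t _; rewrite colblk_blkmx.
have := minXU X' U' feasXU'.
rewrite !norm1_famcost (bigD1 i) //= [X in _ <= X](bigD1 i) //=.
rewrite [X in _ <= _ + X](eq_bigr (fun k => famcost U k)) => [|k /negbTE ne_ki]; last first.
  by rewrite famcost_blkmx ne_ki.
rewrite lerD2r famcost_blkmx eqxx.
suff -> : ol_cost u = famcost U i by [].
by apply: eq_bigr => t _; rewrite eq_u.
Qed.

End Trajectories.

Section ClosedLoop.
Variables (R : realFieldType) (n m q N : nat) (A : 'M[R]_n) (B : 'M[R]_(n, m)).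
Variables (K : 'M[R]_(m, n)) (H : 'M[R]_(m, q)) (G : 'M[R]_(q, n)) (F : 'M[R]_q).

Lemma clinput_colblk (X : 'M[R]_(n, N * n)) (U : 'M[R]_(m, N * n))
    (Z : 'M[R]_(q, N * n)) i :
  A *m X + B *m U = X *m kron (shiftP R N) 1%:M ->
  block_mx K H G F *m col_mx X Z = col_mx U (Z *m kron (shiftP R N) 1%:M) ->
  colblk Z 0 i = 0 ->
  forall t, clinput A B K H G F (colblk X 0 i) t = colblk U t i.
Proof.
move=> eqXU; rewrite mul_block_col => /eq_col_mx[eqU eqZ] Z0.
have u_t t : H *m colblk Z t i + K *m colblk X t i = colblk U t i.
  by rewrite -eqU colblk_add !colblk_mul addrC.
have state_t t : clstate A B K H G F (colblk X 0 i) t = (colblk X t i, colblk Z t i).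
  elim: t => [|t IH] /=; first by rewrite Z0.
  rewrite IH u_t -!colblk_mul_shiftP -eqXU -eqZ !colblk_add !colblk_mul.
  by rewrite [F *m _ + _]addrC.
by move=> t; rewrite /clinput state_t u_t.
Qed.

End ClosedLoop.

Theorem corollary1 (R : realFieldType) (n m p N : nat)
    (A : 'M[R]_n) (B : 'M[R]_(n, m)) (C : 'M[R]_(p, n)) (D : 'M[R]_(p, m))
    (s : 'cV[R]_p) :
  (m <= n)%N ->
  row_full (PhiN n A B) ->            (* (A,B) reachable *)
  (2 <= N)%N ->
  row_full (PhiN N A B) ->            (* Phi_N has full row rank n *)
  forall (X : 'M[R]_(n, N * n)) (U : 'M[R]_(m, N * n)),
  prob1_minimizer A B C D s X U ->
  forall (K : 'M[R]_(m, n)) (H : 'M[R]_(m, n * (N - 1)))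
         (G : 'M[R]_(n * (N - 1), n)) (F : 'M[R]_(n * (N - 1))),
  block_mx K H G F *m col_mx X (Zmat R n N) = col_mx U (Vmat R n N) ->
  forall i : 'I_n,
  ol_optimal A B C D s (delta_mx i 0)
    (stack N (clinput A B K H G F (delta_mx i 0))).
Proof.
(* The rank conditions only ensure, in the paper, that K, H, G, F exist. *)
move=> _ _ _ _ X U minXU K H G F eqKHGF i.
have [[eqXU /init_colblkP init _] _] := minXU.
apply: (minimizer_family_optimal minXU) => t lt_tN.
rewrite blk_stack // -init.
by apply: clinput_colblk; [exact: eqXU | exact: eqKHGF | exact: colblk0_Zmat].
Qed.
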